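(* Let $A\in(0,1)$, $M<0$, $Q>0$, $S>0$ and consider the planar system $$\frac{du}{d\tau}=u^2\big((u+A)(1-u)(u-M)-Qv\big),\qquad \frac{dv}{d\tau}=S(u+A)(u-v)v$$ on $\{u\ge 0,\ v\ge 0\}$. Put $T=1-A+M$, $L=A(M+1)-Q-M$ and $g(u)=u^3-Tu^2-Lu+AM$. Let $u^*\in(0,1)$ be a root of $g$, and set $\Delta=(u^*-T)^2-4\big(u^*(u^*-T)-L\big)$ and $u^*_\pm=\tfrac12\big(T-u^*\pm\sqrt{\Delta}\big)$ whenever $\Delta\ge 0$, with the root $u^*$ chosen so that $u^*\le u^*_-\le u^*_+$. Assume $T>0$, $L<0$ and $\Delta=0$, so that the equilibria $P_2=(u^*_-,u^*_-)$ and $P_3=(u^*_+,u^*_+)$ coincide. Assume moreover that $$S=\frac{Q\,(T-u^* )}{1+A+M-u^*}.$$ Then the equilibrium $P_2=P_3=(u^*_-,u^*_-)$ is a cusp point.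
   Context: The positive equilibria of the system are the points $(u,u)$ with $u>0$ a root of $g$; since $g(0)=AM<0<Q=g(1)$, $g$ always has a root in $(0,1)$. For such a root $u^*$, $\Delta$ is the discriminant and $u^*_\pm$ are the roots of the quadratic $g(u)/(u-u^* )=u^2+(u^*-T)u+u^*(u^*-T)-L$. A cusp point (in the sense of Andronov et al.) is an equilibrium whose Jacobian matrix is nonzero and nilpotent, i.e. has a double zero eigenvalue with a single Jordan block; it is a codimension-two (Bogdanov--Takens type) singularity. *)

From HB Require Import structures.
From mathcomp Require Import all_boot all_order all_algebra.
From mathcomp Require Import all_classical all_reals all_analysis.
Set Implicit Arguments. Unset Strict Implicit. Unset Printing Implicit Defensive.
Import Order.TTheory GRing.Theory Num.Theory.
Local Open Scope ring_scope.

Section Model.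
Variables (R : realType) (A M Q S : R).

Definition fu (u v : R) : R := u ^+ 2 * ((u + A) * (1 - u) * (u - M) - Q * v).
Definition fv (u v : R) : R := S * (u + A) * (u - v) * v.

Definition Tpar : R := 1 - A + M.
Definition Lpar : R := A * (M + 1) - Q - M.
Definition gpoly (u : R) : R := u ^+ 3 - Tpar * u ^+ 2 - Lpar * u + A * M.
Definition Delta (us : R) : R := (us - Tpar) ^+ 2 - 4 * (us * (us - Tpar) - Lpar).
Definition uminus (us : R) : R := (Tpar - us - Num.sqrt (Delta us)) / 2.
Definition uplus (us : R) : R := (Tpar - us + Num.sqrt (Delta us)) / 2.

Definition jacobian (u v : R) : 'M[R]_2 :=
  \matrix_(i < 2, j < 2)
    (if i == 0 :> nat then
       (if j == 0 :> nat then derive1 (fun x => fu x v) u else derive1 (fun y => fu u y) v)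
     else
       (if j == 0 :> nat then derive1 (fun x => fv x v) u else derive1 (fun y => fv u y) v)).

Definition is_equilibrium (u v : R) : Prop := fu u v = 0 /\ fv u v = 0.
Definition nilpotent_mx (J : 'M[R]_2) : Prop := exists k : nat, J ^+ k = 0.
Definition cusp_point (u v : R) : Prop :=
  is_equilibrium u v /\ jacobian u v != 0 /\ nilpotent_mx (jacobian u v).
End Model.

(** With [w = (T - us)/2], the root [us] of [g] gives the factorisation
    [g(u) = (u - us) ((u - w)^2 - Delta/4)], so for [Delta = 0] the point [w]
    is a double root of [g] and [P2 = P3 = (w, w)].  Since
    [(u + A)(1 - u)(u - M) - Q u = - g(u)], both partial maps of the vector
    field through [(w, w)] then vanish at [w] with an explicit factor [x - w],
    which makes the Jacobian computable by hand; the prescribed value of [S]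
    is exactly [S (w + A) = Q w], which turns it into the rank-one matrix
    [[c, -c], [c, -c]] with [c = Q w^2 <> 0], whose square is zero. *)
From Pilot Require Import Defs.
From HB Require Import structures.
From mathcomp Require Import all_boot all_order all_algebra.
From mathcomp Require Import all_classical all_reals all_analysis.
From mathcomp Require Import ring.
Set Implicit Arguments. Unset Strict Implicit.
Import Order.TTheory GRing.Theory Num.Theory.
Local Open Scope ring_scope.

Definition horner_ringE :=
  (hornerM, hornerXn, hornerD, hornerN, hornerC, hornerX, hornerZ).

Lemma derive1_mulXsubC (R : realType) (p : {poly R}) (w : R) :
  derive1 (fun x => (x - w) * p.[x]) w = p.[w].
Proof.
have -> : (fun x => (x - w) * p.[x]) = horner (('X - w%:P) * p).
  by apply/funext => x; rewrite hornerM hornerXsubC.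
rewrite -derivE poly.derivM derivXsubC mul1r hornerD hornerM hornerXsubC.
by rewrite subrr mul0r addr0.
Qed.

Section TwoByTwo.
Context {R : comPzRingType}.

Definition dup_row_mx (c : R) : 'M[R]_2 :=
  \matrix_(i < 2, j < 2) (if j == 0 :> nat then c else - c).

Lemma dup_row_mx_sqr (c : R) : dup_row_mx c ^+ 2 = 0.
Proof.
apply/matrixP => i j; rewrite expr2 !mxE big_ord_recr big_ord1 /= !mxE /=.
by rewrite mulNr addrN.
Qed.

Lemma dup_row_mx_eq0 (c : R) : (dup_row_mx c == 0) = (c == 0).
Proof.
apply/eqP/eqP => [/matrixP/(_ 0 0)|->]; first by rewrite !mxE.
by apply/matrixP => i j; rewrite !mxE oppr0; case: ifP.
Qed.

End TwoByTwo.

Section DoubleRoot.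
Variables (R : realType) (A M Q S us : R).

Local Notation T := (Tpar A M).
Local Notation g := (gpoly A M Q).
Local Notation D := (Delta A M Q us).

Lemma prey_nullcline_gpoly u :
  (u + A) * (1 - u) * (u - M) - Q * u = - g u.
Proof. by rewrite /gpoly /Tpar /Lpar; ring. Qed.

Lemma gpoly_sub_root u :
  g u - g us = (u - us) * ((u - (T - us) / 2) ^+ 2 - D / 4).
Proof. by rewrite /gpoly /Delta /Tpar /Lpar; field. Qed.

Hypotheses (hroot : g us = 0) (hD : D = 0).

Lemma uminus_double_root : uminus A M Q us = (T - us) / 2.
Proof. by rewrite /uminus hD sqrtr0 subr0. Qed.

Variable w : R.
Hypothesis w_def : w = (T - us) / 2.

Lemma prey_nullcline_double_root u :
  (u + A) * (1 - u) * (u - M) - Q * u = - ((u - us) * (u - w) ^+ 2).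
Proof.
rewrite prey_nullcline_gpoly -[g u]subr0 -hroot gpoly_sub_root hD w_def.
by rewrite mul0r subr0.
Qed.

Lemma fu_factor_u x :
  fu A M Q x w = (x - w) * ('X^2 * (Q%:P - ('X - us%:P) * ('X - w%:P))).[x].
Proof.
rewrite /fu !horner_ringE.
have -> : (x + A) * (1 - x) * (x - M) = Q * x - (x - us) * (x - w) ^+ 2.
  by rewrite -[LHS](subrK (Q * x)) prey_nullcline_double_root; ring.
by ring.
Qed.

Lemma fu_factor_v y : fu A M Q w y = (y - w) * (- Q * w ^+ 2)%:P.[y].
Proof.
rewrite /fu hornerC.
have -> : (w + A) * (1 - w) * (w - M) = Q * w.
  by rewrite -[LHS](subrK (Q * w)) prey_nullcline_double_root subrr; ring.
by ring.
Qed.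

Lemma fv_factor_u x : fv A S x w = (x - w) * (S * w *: ('X + A%:P)).[x].
Proof. by rewrite /fv !horner_ringE; ring. Qed.

Lemma fv_factor_v y : fv A S w y = (y - w) * (- S * (w + A) *: 'X).[y].
Proof. by rewrite /fv !horner_ringE; ring. Qed.

Hypothesis hSw : S * (w + A) = Q * w.

Lemma jacobian_double_root :
  Defs.jacobian A M Q S w w = dup_row_mx (Q * w ^+ 2).
Proof.
have c_def : Q * w ^+ 2 = S * (w + A) * w by rewrite hSw -mulrA -expr2.
apply/matrixP => i j; rewrite !mxE.
case: i => [[|[|//]] ?]; case: j => [[|[|//]] ?] /=.
- under eq_fun do rewrite fu_factor_u.
  by rewrite derive1_mulXsubC !horner_ringE subrr; ring.
- under eq_fun do rewrite fu_factor_v.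
  by rewrite derive1_mulXsubC hornerC mulNr.
- under eq_fun do rewrite fv_factor_u.
  by rewrite derive1_mulXsubC !horner_ringE c_def; ring.
- under eq_fun do rewrite fv_factor_v.
  by rewrite derive1_mulXsubC !horner_ringE c_def; ring.
Qed.

End DoubleRoot.

Theorem theorem2 (R : realType) (A M Q S us : R)
  (hA0 : 0 < A) (hA1 : A < 1) (hM : M < 0) (hQ : 0 < Q) (hS : 0 < S)
  (hus0 : 0 < us) (hus1 : us < 1) (hroot : gpoly A M Q us = 0)
  (hT : 0 < Tpar A M) (hL : Lpar A M Q < 0)
  (hD : Delta A M Q us = 0)
  (hord1 : us <= uminus A M Q us) (hord2 : uminus A M Q us <= uplus A M Q us)
  (hSval : S = Q * (Tpar A M - us) / (1 + A + M - us)) :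
  cusp_point A M Q S (uminus A M Q us) (uminus A M Q us).
Proof.
set w := uminus A M Q us.
have w_def : w = (Tpar A M - us) / 2 by rewrite /w uminus_double_root.
have w_gt0 : 0 < w by apply: lt_le_trans hord1.
(* [x / 0 = 0], so [0 < S] excludes a vanishing denominator in [hSval]. *)
have den_neq0 : 1 + A + M - us != 0.
  by apply/eqP => den0; move: hS; rewrite hSval den0 invr0 mulr0 ltxx.
have hSw : S * (w + A) = Q * w by rewrite hSval w_def /Tpar; field.
have hJ := jacobian_double_root hroot hD w_def hSw.
split; [split|split].
- by rewrite /fu (prey_nullcline_double_root hroot hD w_def) subrr; ring.
- by rewrite /fv subrr mulr0 mul0r.
- by rewrite hJ dup_row_mx_eq0 mulf_eq0 negb_or gt_eqF // expf_neq0 // gt_eqF.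
- by exists 2%N; rewrite hJ dup_row_mx_sqr.
Qed.
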